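(* Under Hypothesis (H), define the functions $A_+:=n^2+(\mathrm{tr}S)^2-(\mathrm{tr}P)^2-(\mathrm{tr}(SP))^2+\mathrm{tr}(SPSP)-n-2n\,\mathrm{tr}(S)+2\,\mathrm{tr}(P)\mathrm{tr}(SP)$ and $A_-:=n^2+(\mathrm{tr}S)^2-(\mathrm{tr}P)^2-(\mathrm{tr}(SP))^2+\mathrm{tr}(SPSP)-n+2n\,\mathrm{tr}(S)-2\,\mathrm{tr}(P)\mathrm{tr}(SP)$ on $M$. Then: (i) $A_+\ge0$ and $A_-\ge0$ on $M$. (ii) If $\mathrm{rk}\,E_+(S)=1$ then $A_-\equiv0$. If $\mathrm{rk}\,E_+(S)\ge2$, then for every $x\in M$: $A_-(x)=0$ if and only if there exists $\varepsilon\in\{-1,1\}$ with $E_+(S)_x\subseteq E_\varepsilon(P)_x$. (iii) If $\mathrm{rk}\,E_-(S)=1$ then $A_+\equiv0$. If $\mathrm{rk}\,E_-(S)\ge2$, then for every $x\in M$: $A_+(x)=0$ if and only if there exists $\varepsilon\in\{-1,1\}$ with $E_-(S)_x\subseteq E_\varepsilon(P)_x$.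
   Context: Let $(M,g)$ be a Riemannian manifold of dimension $n$ with Levi-Civita connection $\nabla$; vectors and 1-forms are identified via $g$. For vectors $X,Y$, $X\odot Y$ is the endomorphism $Z\mapsto\langle X,Z\rangle Y+\langle Y,Z\rangle X$. Hypothesis (H): $M$ is oriented, compact, connected; $\theta$ is a 1-form on $M$, not identically zero (the Lee form of the Weyl connection $D_XY=\nabla_XY+\theta(Y)X+\theta(X)Y-\langle X,Y\rangle\theta^\sharp$); $S$ is a $g$-orthogonal involution of $\mathrm{T}M$, $S\neq\pm\mathrm{Id}$, with $DS=0$, equivalently $\nabla_XS=SX\odot\theta-S\theta\odot X$ for all $X$; $P$ is a $\nabla$-parallel $g$-orthogonal involution of $\mathrm{T}M$, $P\neq\pm\mathrm{Id}$. For an involution $F$, $E_+(F)$ and $E_-(F)$ denote its $+1$ and $-1$ eigenbundles. *)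

From HB Require Import structures.
From mathcomp Require Import all_boot all_order all_algebra.
From mathcomp Require Import reals.
Set Implicit Arguments. Unset Strict Implicit. Unset Printing Implicit Defensive.
Import Order.TTheory GRing.Theory Num.Theory.
Local Open Scope ring_scope.

(* Pointwise model: at each point x of M, an endomorphism field F is given by
   its matrix F x in a g-orthonormal frame of T_xM, so g is the standard
   inner product and the adjoint is the transpose. *)

Definition orth_involution (R : realType) (n : nat) (F : 'M[R]_n) : Prop :=
  F *m F = 1%:M /\ F^T *m F = 1%:M.

Definition Eplus (R : realType) (n : nat) (F : 'M[R]_n) := eigenspace F 1.
Definition Eminus (R : realType) (n : nat) (F : 'M[R]_n) := eigenspace F (-1).

Definition Abase (R : realType) (n : nat) (S P : 'M[R]_n) : R :=
  n%:R ^+ 2 + (\tr S) ^+ 2 - (\tr P) ^+ 2 - (\tr (S *m P)) ^+ 2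
  + \tr (S *m P *m S *m P) - n%:R.

Definition Aplus (R : realType) (n : nat) (S P : 'M[R]_n) : R :=
  Abase S P - 2 * n%:R * \tr S + 2 * \tr P * \tr (S *m P).

Definition Aminus (R : realType) (n : nat) (S P : 'M[R]_n) : R :=
  Abase S P + 2 * n%:R * \tr S - 2 * \tr P * \tr (S *m P).

From HB Require Import structures.
From mathcomp Require Import all_boot all_order all_algebra.
From mathcomp Require Import reals.
From mathcomp Require Import ring lra.
Import Order.TTheory GRing.Theory Num.Theory.
Set Implicit Arguments. Unset Strict Implicit. Unset Printing Implicit Defensive.
Local Open Scope ring_scope.

(* For e = 1 (resp. -1), pi := (1 + e S)/2 is the orthogonal projection onto
   E_e(S), and A_- (resp. A_+) equals 4 [(p t - tau^2) + (p - 1)(p - t)] with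
   p = tr pi = rk E_e(S), tau = tr (pi P) and t = tr (pi P pi P).  Both
   brackets are nonnegative, being squared Frobenius norms up to the factor p:
   p - t = |pi P (1 - pi)|^2 and p (p t - tau^2) = |tau pi - p pi P pi|^2
   (Cauchy-Schwarz for pi P pi against pi).  If p = 1 then pi P pi = tau pi
   and both brackets vanish.  If p >= 2, vanishing forces pi P (1 - pi) = 0
   and pi P pi to be a multiple of pi, i.e. pi P = eps pi, and then
   eps^2 p = t = p. *)

Section Gram.
Variable R : realFieldType.

Lemma mxtrace_gram m k (Y : 'M[R]_(m, k)) :
  \tr (Y *m Y^T) = \sum_i \sum_j Y i j ^+ 2.
Proof.
by apply: eq_bigr => i _; rewrite mxE; apply: eq_bigr => j _; rewrite !mxE expr2.
Qed.

Lemma mxtrace_gram_ge0 m k (Y : 'M[R]_(m, k)) : 0 <= \tr (Y *m Y^T).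
Proof.
by rewrite mxtrace_gram; apply: sumr_ge0 => i _; apply: sumr_ge0 => j _; apply: sqr_ge0.
Qed.

Lemma mxtrace_gram_eq0 m k (Y : 'M[R]_(m, k)) : \tr (Y *m Y^T) = 0 -> Y = 0.
Proof.
have row_ge0 i : 0 <= \sum_j Y i j ^+ 2 by apply: sumr_ge0 => j _; apply: sqr_ge0.
rewrite mxtrace_gram => /psumr_eq0P-/(_ (fun i _ => row_ge0 i)) Y0.
apply/matrixP => i j; rewrite mxE; apply/eqP; rewrite -sqrf_eq0; apply/eqP.
by apply: (psumr_eq0P _ (Y0 i isT)) => // l _; apply: sqr_ge0.
Qed.

End Gram.

Section Idempotent.
Variables (F : fieldType) (n : nat) (pi : 'M[F]_n).
Hypothesis pi_idem : pi *m pi = pi.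

Lemma row_base_mul_col_base : row_base pi *m col_base pi = 1%:M.
Proof.
move: (mulmx_base pi) (row_base_free pi) (col_base_full pi).
move: (col_base pi) (row_base pi) => c w cw w_free c_full.
apply: (row_free_inj w_free); rewrite mul1mx; apply: (row_full_inj c_full).
by rewrite !mulmxA cw -mulmxA cw pi_idem.
Qed.

Lemma mxtrace_idem : \tr pi = (\rank pi)%:R.
Proof. by rewrite -{1}(mulmx_base pi) mxtrace_mulC row_base_mul_col_base mxtrace1. Qed.

Lemma rank1_idem_conj (A : 'M[F]_n) :
  \rank pi = 1%N -> pi *m A *m pi = \tr (pi *m A) *: pi.
Proof.
move=> rank1; have := mulmx_base pi; have := row_base_mul_col_base.
move: (col_base pi) (row_base pi); rewrite rank1 => c w wc1 <-.
set k := (w *m A *m c) 0 0.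
have wAc : w *m A *m c = k%:M.
  by apply/matrixP => i j; rewrite [i]ord1 [j]ord1 [RHS]mxE eqxx mulr1n.
have -> : c *m w *m A *m (c *m w) = c *m (w *m A *m c) *m w by rewrite !mulmxA.
rewrite wAc mul_mx_scalar -scalemxAl; congr (_ *: _).
by rewrite -mulmxA mxtrace_mulC wAc mxtrace_scalar.
Qed.

End Idempotent.

Definition proj_defect (R : pzRingType) n (pi P : 'M[R]_n) : R :=
  (\tr pi * \tr (pi *m P *m pi *m P) - \tr (pi *m P) ^+ 2)
  + (\tr pi - 1) * (\tr pi - \tr (pi *m P *m pi *m P)).

Section ProjectionInvolution.
Variables (R : realFieldType) (n : nat) (pi P : 'M[R]_n).
Hypotheses (pi_idem : pi *m pi = pi) (pi_sym : pi^T = pi).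
Hypotheses (P_invol : P *m P = 1%:M) (P_sym : P^T = P).

Local Notation p := (\tr pi).
Local Notation tau := (\tr (pi *m P)).
Local Notation t := (\tr (pi *m P *m pi *m P)).
Local Notation X := (pi *m P *m pi).

Let pi_idemA k (Y : 'M[R]_(n, k)) : pi *m (pi *m Y) = pi *m Y.
Proof. by rewrite mulmxA pi_idem. Qed.

Let P_involA k (Y : 'M[R]_(n, k)) : P *m (P *m Y) = Y.
Proof. by rewrite mulmxA P_invol mul1mx. Qed.

Let X_sym : X^T = X.
Proof. by rewrite !trmx_mul pi_sym P_sym mulmxA. Qed.

Let mxtrace_X : \tr X = tau.
Proof. by rewrite mxtrace_mulC mulmxA pi_idem. Qed.

Let mxtrace_XX : \tr (X *m X) = t.
Proof.
by rewrite -!mulmxA pi_idemA !mulmxA mxtrace_mulC !mulmxA pi_idem.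
Qed.

Lemma mxtrace_gram_projP_compl :
  \tr ((pi *m P *m (1%:M - pi)) *m (pi *m P *m (1%:M - pi))^T) = p - t.
Proof.
have compl_sym : (1%:M - pi)^T = 1%:M - pi by rewrite linearB /= trmx1 pi_sym.
rewrite !trmx_mul compl_sym pi_sym P_sym -!mulmxA.
rewrite !(mulmxBl, mulmxBr, mul1mx, mulmx1) !pi_idemA P_involA pi_idem subrr subr0.
by rewrite linearB /= !mulmxA mxtrace_mulC !mulmxA pi_idem.
Qed.

Lemma mxtrace_gram_cauchy :
  \tr ((tau *: pi - p *: X) *m (tau *: pi - p *: X)^T) = p * (p * t - tau ^+ 2).
Proof.
have piX : pi *m X = X by rewrite !mulmxA pi_idem.
have Xpi : X *m pi = X by rewrite -!mulmxA pi_idem.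
rewrite linearB /= !linearZ /= X_sym pi_sym.
rewrite !scalerN !(mulmxDl, mulmxDr) !(mulmxN, mulNmx) -!scalemxAl -!scalemxAr.
rewrite piX Xpi pi_idem !(mxtraceD, linearN, mxtraceZ) /= !mxtraceZ mxtrace_X mxtrace_XX.
ring.
Qed.

Lemma tr_projPprojP_le : t <= p.
Proof. by rewrite -subr_ge0 -mxtrace_gram_projP_compl mxtrace_gram_ge0. Qed.

Lemma tr_projP_sqr_le : 0 < p -> tau ^+ 2 <= p * t.
Proof.
move=> p_gt0; rewrite -subr_ge0 -(pmulr_rge0 _ p_gt0) -mxtrace_gram_cauchy.
exact: mxtrace_gram_ge0.
Qed.

Lemma tr_projPprojP_eq : t = p -> pi *m P = X.
Proof.
move=> t_p; have /eqP : pi *m P *m (1%:M - pi) = 0.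
  by apply: mxtrace_gram_eq0; rewrite mxtrace_gram_projP_compl t_p subrr.
by rewrite mulmxBr mulmx1 subr_eq0 => /eqP.
Qed.

Lemma tr_projP_sqr_eq : tau ^+ 2 = p * t -> p *: X = tau *: pi.
Proof.
move=> cs_eq; apply/esym/eqP; rewrite -subr_eq0; apply/eqP/mxtrace_gram_eq0.
by rewrite mxtrace_gram_cauchy cs_eq subrr mulr0.
Qed.

Let mxtrace_projP_scalar k : pi *m P = k *: pi -> t = k ^+ 2 * p.
Proof. by move=> piP; rewrite piP -!scalemxAl pi_idem piP !mxtraceZ mulrA -expr2. Qed.

Lemma proj_defect_ge0 : 0 <= proj_defect pi P.
Proof.
have [->|pi_neq0] := eqVneq pi 0.
  by rewrite /proj_defect !(mul0mx, linear0); lra.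
have p_ge1 : 1 <= p by rewrite mxtrace_idem // ler1n lt0n mxrank_eq0.
have := tr_projPprojP_le; have := tr_projP_sqr_le (lt_le_trans ltr01 p_ge1).
rewrite /proj_defect; nra.
Qed.

Lemma proj_defect_rank1 : \rank pi = 1%N -> proj_defect pi P = 0.
Proof.
move=> rank1; have p1 : p = 1 by rewrite mxtrace_idem // rank1.
have X_scalar : X = tau *: pi by rewrite rank1_idem_conj.
rewrite /proj_defect p1 subrr mul0r addr0 mul1r -mxtrace_XX X_scalar.
by rewrite -scalemxAl -scalemxAr pi_idem scalerA mxtraceZ p1 mulr1 expr2 subrr.
Qed.

Lemma proj_defect_eq0P : (2 <= \rank pi)%N ->
  proj_defect pi P = 0 <-> exists eps : R, (eps = 1 \/ eps = -1) /\ pi *m P = eps *: pi.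
Proof.
move=> rank2; have p_ge2 : 2 <= p by rewrite mxtrace_idem // ler_nat.
have p_gt0 : 0 < p by lra.
have p_neq0 : p != 0 by rewrite gt_eqF.
split=> [defect0|[eps [eps_pm1 piP]]]; last first.
  rewrite /proj_defect (mxtrace_projP_scalar piP) piP mxtraceZ.
  by case: eps_pm1 => ->; ring.
have := tr_projPprojP_le; have := tr_projP_sqr_le p_gt0.
rewrite /proj_defect in defect0 => cs tp.
have t_p : t = p by nra.
have cs_eq : tau ^+ 2 = p * t by nra.
have piP : pi *m P = (tau / p) *: pi.
  rewrite {1}tr_projPprojP_eq // -[X](scalerK p_neq0) tr_projP_sqr_eq //.
  by rewrite scalerA mulrC.
exists (tau / p); split=> //.
have /eqP : (tau / p) ^+ 2 = 1.
  by apply: (mulIf p_neq0); rewrite mul1r -(mxtrace_projP_scalar piP).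
by rewrite sqrf_eq1 => /orP[]/eqP; auto.
Qed.

End ProjectionInvolution.

Definition eigen_proj (F : fieldType) n (S : 'M[F]_n) (e : F) : 'M[F]_n :=
  2^-1 *: (1%:M + e *: S).

Section EigenProjector.
Variables (F : numFieldType) (n : nat) (S : 'M[F]_n) (e : F).
Hypotheses (S_invol : S *m S = 1%:M) (e_sqr : e ^+ 2 = 1).

Let half_double m (Y : 'M[F]_(m, n)) : (2^-1 : F) *: (Y + Y) = Y.
Proof. by rewrite -mulr2n -scaler_nat scalerA mulVf ?scale1r // pnatr_eq0. Qed.

Let mul_eigen_proj_eigenvector m (Y : 'M[F]_(m, n)) :
  Y *m S = e *: Y -> Y *m eigen_proj S e = Y.
Proof.
move=> YS; rewrite -scalemxAr mulmxDr mulmx1 -scalemxAr YS scalerA -expr2 e_sqr.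
by rewrite scale1r half_double.
Qed.

Lemma eigen_projS : eigen_proj S e *m S = e *: eigen_proj S e.
Proof.
rewrite /eigen_proj -scalemxAl mulmxDl mul1mx -scalemxAl S_invol scalerA.
rewrite !scalerDr !scalerA addrC mulrC; congr (_ + _).
by rewrite mulrC mulrA -expr2 e_sqr mul1r.
Qed.

Lemma eigen_proj_idem : eigen_proj S e *m eigen_proj S e = eigen_proj S e.
Proof. exact/mul_eigen_proj_eigenvector/eigen_projS. Qed.

Lemma eigen_proj_sym : S^T = S -> (eigen_proj S e)^T = eigen_proj S e.
Proof.
by move=> S_sym; rewrite /eigen_proj !linearZ /= linearD /= trmx1 linearZ /= S_sym.
Qed.

Lemma eigenspace_eigen_proj : (eigenspace S e :=: eigen_proj S e)%MS.
Proof.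
apply/eqmxP/andP; split; last exact/eigenspaceP/eigen_projS.
by rewrite -{1}(mul_eigen_proj_eigenvector (eigenspaceP (submx_refl _))) submxMl.
Qed.

End EigenProjector.

Definition Asigned (R : realType) n (e : R) (S P : 'M[R]_n) : R :=
  Abase S P + e * (2 * n%:R * \tr S - 2 * \tr P * \tr (S *m P)).

Lemma Aminus_signed (R : realType) n (S P : 'M[R]_n) : Aminus S P = Asigned 1 S P.
Proof. by rewrite /Aminus /Asigned; ring. Qed.

Lemma Aplus_signed (R : realType) n (S P : 'M[R]_n) : Aplus S P = Asigned (-1) S P.
Proof. by rewrite /Aplus /Asigned; ring. Qed.

Lemma orth_involution_sym (R : realType) n (F : 'M[R]_n) : orth_involution F -> F^T = F.
Proof. by case=> FF FTF; rewrite -[F^T]mulmx1 -FF mulmxA FTF mul1mx. Qed.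

Section SignedA.
Variables (R : realType) (n : nat) (S P : 'M[R]_n) (e : R).
Hypotheses (S_invol : orth_involution S) (P_invol : orth_involution P).
Hypothesis e_sqr : e ^+ 2 = 1.

Local Notation pi := (eigen_proj S e).

Let S_sq : S *m S = 1%:M := S_invol.1.
Let pi_idem : pi *m pi = pi := eigen_proj_idem S_sq e_sqr.
Let pi_sym : pi^T = pi := eigen_proj_sym e (orth_involution_sym S_invol).
Let P_sq : P *m P = 1%:M := P_invol.1.
Let P_sym : P^T = P := orth_involution_sym P_invol.

Lemma Asigned_proj_defect : Asigned e S P = 4 * proj_defect pi P.
Proof.
have tr_pi : \tr pi = 2^-1 * (n%:R + e * \tr S).
  by rewrite mxtraceZ mxtraceD mxtrace1 mxtraceZ.
have tr_piP : \tr (pi *m P) = 2^-1 * (\tr P + e * \tr (S *m P)).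
  by rewrite -scalemxAl mulmxDl mul1mx -scalemxAl mxtraceZ mxtraceD mxtraceZ.
have tr_piPpiP : \tr (pi *m P *m pi *m P) =
    2^-1 * (2^-1 * (n%:R + 2 * e * \tr S + \tr (S *m P *m S *m P))).
  have PSP : \tr (P *m S *m P) = \tr S by rewrite mxtrace_mulC mulmxA P_sq mul1mx.
  have SPP : \tr (S *m P *m P) = \tr S by rewrite -mulmxA P_sq mulmx1.
  rewrite /eigen_proj -!scalemxAl -scalemxAr -scalemxAl !mxtraceZ.
  rewrite !(mulmxDl, mulmxDr, mul1mx, mulmx1) -!scalemxAl -!scalemxAr -!scalemxAl.
  rewrite scalerA -expr2 e_sqr scale1r !mxtraceD !mxtraceZ P_sq mxtrace1 PSP SPP.
  ring.
rewrite /proj_defect tr_pi tr_piP tr_piPpiP /Asigned /Abase.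
have : (e == 1) || (e == -1) by rewrite -sqrf_eq1 e_sqr.
by case/orP => /eqP ->; field.
Qed.

Lemma Asigned_ge0 : 0 <= Asigned e S P.
Proof. by rewrite Asigned_proj_defect mulr_ge0 // proj_defect_ge0. Qed.

Lemma Asigned_rank1 : \rank (eigenspace S e) = 1%N -> Asigned e S P = 0.
Proof.
rewrite eigenspace_eigen_proj // => rank1.
by rewrite Asigned_proj_defect proj_defect_rank1 ?mulr0.
Qed.

Lemma Asigned_eq0P : (2 <= \rank (eigenspace S e))%N ->
  Asigned e S P = 0 <->
  exists eps : R, (eps = 1 \/ eps = -1) /\ (eigenspace S e <= eigenspace P eps)%MS.
Proof.
rewrite eigenspace_eigen_proj // => rank2.
have scale4_eq0 : 4 * proj_defect pi P = 0 <-> proj_defect pi P = 0.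
  by split=> [/eqP|->]; rewrite ?mulr0 // mulf_eq0 pnatr_eq0 /= => /eqP.
rewrite Asigned_proj_defect; apply: (iff_trans scale4_eq0).
apply: (iff_trans (proj_defect_eq0P pi_idem pi_sym P_sq P_sym rank2)).
have pi_eigenP eps :
    reflect (pi *m P = eps *: pi) (eigenspace S e <= eigenspace P eps)%MS.
  by rewrite eigenspace_eigen_proj //; apply: eigenspaceP.
by split=> -[eps [eps_pm1 /pi_eigenP piP]]; exists eps.
Qed.

End SignedA.

Theorem theorem5p4 (R : realType) (n : nat) (M : Type)
    (S P : M -> 'M[R]_n)
    (hS : forall x, orth_involution (S x))
    (hP : forall x, orth_involution (P x))
    (hS1 : S <> (fun _ => 1%:M)) (hSm1 : S <> (fun _ => - 1%:M))
    (hP1 : P <> (fun _ => 1%:M)) (hPm1 : P <> (fun _ => - 1%:M)) :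
  (* (i) *)
  (forall x, 0 <= Aplus (S x) (P x) /\ 0 <= Aminus (S x) (P x)) /\
  (* (ii) *)
  ((forall x, \rank (Eplus (S x)) = 1%N) ->
     forall x, Aminus (S x) (P x) = 0) /\
  ((forall x, (2 <= \rank (Eplus (S x)))%N) ->
     forall x, Aminus (S x) (P x) = 0 <->
       exists eps : R, (eps = 1 \/ eps = -1) /\
         (Eplus (S x) <= eigenspace (P x) eps)%MS) /\
  (* (iii) *)
  ((forall x, \rank (Eminus (S x)) = 1%N) ->
     forall x, Aplus (S x) (P x) = 0) /\
  ((forall x, (2 <= \rank (Eminus (S x)))%N) ->
     forall x, Aplus (S x) (P x) = 0 <->
       exists eps : R, (eps = 1 \/ eps = -1) /\
         (Eminus (S x) <= eigenspace (P x) eps)%MS).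
Proof.
have one_sqr : (1 : R) ^+ 2 = 1 by rewrite expr1n.
have mone_sqr : (-1 : R) ^+ 2 = 1 by rewrite sqrrN expr1n.
rewrite /Eplus /Eminus.
split; [|split; [|split; [|split]]] => [x|rank1 x|rank2 x|rank1 x|rank2 x].
- by rewrite Aplus_signed Aminus_signed !Asigned_ge0.
- by rewrite Aminus_signed Asigned_rank1.
- by rewrite Aminus_signed Asigned_eq0P.
- by rewrite Aplus_signed Asigned_rank1.
- by rewrite Aplus_signed Asigned_eq0P.
Qed.
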